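(* For $\alpha\in\mathbb{K}^\times$ let $A_{8,\alpha}$ be the evolution algebra over the field $\mathbb{K}$ with natural basis $\{u,v\}$ such that $u^2=u$ and $v^2=\alpha u$. For $\alpha,\beta\in\mathbb{K}^\times$, $A_{8,\alpha}$ and $A_{8,\beta}$ are isomorphic if and only if $\overline\alpha=\overline\beta$ in $G_2=\mathbb{K}^\times/(\mathbb{K}^\times)^2$.
   Context: An evolution algebra over $\mathbb{K}$ is a $\mathbb{K}$-algebra with a basis $\{e_i\}$ (natural basis) such that $e_ie_j=0$ for $i\neq j$. $\overline\rho$ denotes the class of $\rho\in\mathbb{K}^\times$ in $G_2$. *)

From HB Require Import structures.
From mathcomp Require Import all_boot all_order all_algebra.
Set Implicit Arguments. Unset Strict Implicit. Unset Printing Implicit Defensive.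
Import GRing.Theory.
Local Open Scope ring_scope.

(* An n-dimensional evolution algebra over a field K, presented in a natural
   basis e_0, ..., e_(n-1): elements are row vectors of coordinates, and the
   structure matrix C gives e_i * e_i = sum_j C i j e_j, e_i * e_j = 0 (i<>j). *)
Definition evo_mul (K : fieldType) (n : nat) (C : 'M[K]_n)
  (x y : 'rV[K]_n) : 'rV[K]_n :=
  \sum_(i < n) (x 0 i * y 0 i) *: row i C.

Definition evo_iso (K : fieldType) (n : nat) (C D : 'M[K]_n) : Prop :=
  exists f : 'rV[K]_n -> 'rV[K]_n,
    [/\ forall (a : K) (x y : 'rV[K]_n), f (a *: x + y) = a *: f x + f y,
        bijective f &
        forall x y : 'rV[K]_n, f (evo_mul C x y) = evo_mul D (f x) (f y)].

(* A_{8,alpha}: natural basis {u, v} = {e_0, e_1},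
   u^2 = u, v^2 = alpha u. *)
Definition A8 (K : fieldType) (alpha : K) : 'M[K]_2 :=
  \matrix_(i < 2, j < 2)
    (if j == 0 then (if i == 0 then 1 else alpha) else 0).

Definition sq_class_eq (K : fieldType) (alpha beta : K) : Prop :=
  exists gamma : K, gamma != 0 /\ alpha = beta * gamma ^+ 2.

From mathcomp Require Import all_boot all_order all_algebra.
From mathcomp Require Import ring.
Set Implicit Arguments. Unset Strict Implicit. Unset Printing Implicit Defensive.
Import GRing.Theory.
Local Open Scope ring_scope.

(* In A_{8,a} the product is x y = (x_u y_u + a x_v y_v) u.  Hence u is the
   only nonzero idempotent, so an isomorphism fixes u; then u f(v) = f(u v) = 0
   forces f(v) = c v, and comparing f(v^2) = alpha u with f(v)^2 = beta c^2 u
   gives alpha = beta c^2.  Conversely v |-> c v is such an isomorphism. *)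

Local Notation u := (delta_mx 0 0 : 'rV_2).
Local Notation v := (delta_mx 0 1 : 'rV_2).

Section ProductA8.

Variables (K : fieldType) (a : K).

Lemma A8_mulE (x y : 'rV[K]_2) :
  evo_mul (A8 a) x y = (x 0 0 * y 0 0 + a * (x 0 1 * y 0 1)) *: u.
Proof.
apply/rowP => j; rewrite /evo_mul summxE !big_ord_recl big_ord0 !mxE /=.
rewrite -[ord0]/(0 : 'I_2) (_ : lift 0 0 = 1); last exact: val_inj.
by case: j => [[|[|//]]] j_lt2; rewrite /= ?mulr1 ?mulr0 ?addr0 // [_ * a]mulrC.
Qed.

Lemma A8_mul_u (x : 'rV[K]_2) : evo_mul (A8 a) u x = x 0 0 *: u.
Proof. by rewrite A8_mulE !mxE /= mul1r mul0r mulr0 addr0. Qed.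

Lemma A8_mul_vv : evo_mul (A8 a) v v = a *: u.
Proof. by rewrite A8_mulE !mxE /= mul0r add0r !mulr1. Qed.

Lemma A8_idem (p : 'rV[K]_2) :
  evo_mul (A8 a) p p = p -> p != 0 -> p = u.
Proof.
move=> pp p_neq0; set s := p 0 0 * p 0 0 + a * (p 0 1 * p 0 1).
have pE : p = s *: u by rewrite -{1}pp A8_mulE.
have p00 : p 0 0 = s by rewrite pE !mxE /= mulr1.
have p01 : p 0 1 = 0 by rewrite pE !mxE /= mulr0.
have s_neq0 : s != 0 by apply: contraNneq p_neq0 => s0; rewrite pE s0 scale0r.
have s1 : s = 1.
  by apply: (mulfI s_neq0); rewrite mulr1 {3}/s p00 p01 mul0r mulr0 addr0.
by rewrite pE s1 scale1r.
Qed.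

End ProductA8.

Section IsomorphismA8.

Variables (K : fieldType) (alpha beta : K) (f : 'rV[K]_2 -> 'rV[K]_2).
Hypothesis f_lin : forall (c : K) x y, f (c *: x + y) = c *: f x + f y.
Hypothesis f_inj : injective f.
Hypothesis f_mul : forall x y, f (evo_mul (A8 alpha) x y) = evo_mul (A8 beta) (f x) (f y).

Lemma iso_map0 : f 0 = 0.
Proof.
by apply: (@addrI _ (f 0)); rewrite addr0 -{1}(scale1r (f 0)) -f_lin scaler0 addr0.
Qed.

Lemma iso_mapZ c x : f (c *: x) = c *: f x.
Proof. by rewrite -[c *: x]addr0 f_lin iso_map0 addr0. Qed.

Lemma iso_map_u : f u = u.
Proof.
apply: (A8_idem (a := beta)); first by rewrite -f_mul A8_mul_u mxE /= scale1r.
rewrite -iso_map0 (inj_eq f_inj); apply/eqP => /rowP/(_ 0).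
by rewrite !mxE /= => /eqP; rewrite oner_eq0.
Qed.

Lemma iso_map_v0 : f v 0 0 = 0.
Proof.
have := f_mul u v; rewrite A8_mul_u mxE /= scale0r iso_map0 iso_map_u A8_mul_u.
by move=> /rowP/(_ 0); rewrite !mxE /= mulr1.
Qed.

Lemma iso_sq_class : alpha = beta * f v 0 1 ^+ 2.
Proof.
have := f_mul v v; rewrite A8_mul_vv iso_mapZ iso_map_u A8_mulE iso_map_v0.
by move=> /rowP/(_ 0); rewrite !mxE /= !mulr1 mul0r add0r expr2.
Qed.

End IsomorphismA8.

Section RescaleV.

Variable K : fieldType.

Definition scale_v (c : K) (x : 'rV[K]_2) : 'rV[K]_2 :=
  \row_j (if j == 0 then x 0 0 else c * x 0 1).

Lemma scale_v_lin c a x y :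
  scale_v c (a *: x + y) = a *: scale_v c x + scale_v c y.
Proof. by apply/rowP => j; rewrite !mxE; case: (j == 0); ring. Qed.

Lemma scale_vK c : c != 0 -> cancel (scale_v c) (scale_v c^-1).
Proof.
move=> c_neq0 x; apply/rowP => j; rewrite !mxE /= mulrA mulVf // mul1r.
by case: j => [[|[|//]]] j_lt2; congr (x 0 _); apply: val_inj.
Qed.

Lemma scale_v_mul beta c x y :
  scale_v c (evo_mul (A8 (beta * c ^+ 2)) x y)
  = evo_mul (A8 beta) (scale_v c x) (scale_v c y).
Proof.
by rewrite !A8_mulE; apply/rowP => j; rewrite !mxE /=; case: (j == 0) => /=; ring.
Qed.

End RescaleV.

Theorem lemma3p17 (K : fieldType) (alpha beta : K) :
  alpha != 0 -> beta != 0 ->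
  (evo_iso (A8 alpha) (A8 beta) <-> sq_class_eq alpha beta).
Proof.
move=> alpha_neq0 _; split=> [[f [f_lin /bij_inj f_inj f_mul]] | [c [c_neq0 ->]]].
  have alphaE := iso_sq_class f_lin f_inj f_mul.
  exists (f v 0 1); split=> //; apply: contraNneq alpha_neq0 => fv1_0.
  by rewrite alphaE fv1_0 expr0n mulr0.
exists (scale_v c); split; first exact: scale_v_lin.
  exists (scale_v c^-1); first exact: scale_vK.
  by have := scale_vK (invr_neq0 c_neq0); rewrite invrK.
exact: scale_v_mul.
Qed.
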